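(* Consider the graded cluster algebra $\mathcal{A}\big((x_1,x_2,x_3),B,(1,1,2)\big)$ with $B=\begin{pmatrix}0&2&-1\\-2&0&1\\1&-1&0\end{pmatrix}$. It is of mixed type: the occurring degrees are exactly $\pm1$ and $\pm2$; there is exactly one cluster variable of degree $2$ and exactly one of degree $-2$, and there are infinitely many cluster variables of degree $1$ and infinitely many of degree $-1$. Moreover the grading is balanced.
   Context: Graded cluster algebras: for a $3\times3$ skew-symmetric integer matrix $B=(b_{ij})$ and $k\in\{1,2,3\}$, $\mu_k(B)=(b'_{ij})$ with $b'_{ij}=-b_{ij}$ if $i=k$ or $j=k$ and $b'_{ij}=b_{ij}+\operatorname{sgn}(b_{ik})\max(b_{ik}b_{kj},0)$ otherwise. A seed $((x_1,x_2,x_3),B)$ mutates in direction $k$ to $(x',\mu_k B)$ with $x'_j=x_j$ ($j\ne k$) and $x'_k=\big(\prod_{b_{ik}>0}x_i^{b_{ik}}+\prod_{b_{ik}<0}x_i^{-b_{ik}}\big)/x_k$. Cluster variables are all entries of clusters reachable by iterated mutation; $\mathcal{A}(x,B,g)$ is the algebra they generate, graded by $\deg x_i=g_i$ where $Bg=0$; under mutation at $k$ the degree vector becomes $g'$ with $g'_j=g_j$ ($j\neq k$), $g'_k=-g_k+\sum_{b_{ik}>0}b_{ik}g_i$, and every cluster variable is homogeneous. A degree occurs if some cluster variable has it. Mixed type means some occurring degrees contain finitely many cluster variables and others infinitely many. The grading is balanced if for every $d$ there is a bijection between the cluster variables of degree $d$ and those of degree $-d$. *)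

From HB Require Import structures.
From mathcomp Require Import all_boot all_order all_algebra.
From mathcomp Require Import fraction.
From mathcomp Require Import mpoly.
Set Implicit Arguments. Unset Strict Implicit. Unset Printing Implicit Defensive.
Import Order.TTheory GRing.Theory Num.Theory.
Local Open Scope ring_scope.

Definition KF : fieldType := {fraction {mpoly rat[3]}}.

Definition xinit : 'I_3 -> KF := fun i => (tofrac ('X_i : {mpoly rat[3]})).

(* A graded seed: cluster, exchange matrix, degree vector. *)
Record gseed := GSeed {
  sx : 'I_3 -> KF;
  sB : 'M[int]_3;
  sg : 'I_3 -> int }.

Definition mutB (k : 'I_3) (B : 'M[int]_3) : 'M[int]_3 :=
  \matrix_(i < 3, j < 3)
    if (i == k) || (j == k) then - B i j
    else B i j + Num.sg (B i k) * Num.max (B i k * B k j) 0.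

Definition mutx (k : 'I_3) (B : 'M[int]_3) (x : 'I_3 -> KF) : 'I_3 -> KF :=
  fun j => if j == k then
     ((\prod_(i < 3 | 0 < B i k) x i ^+ `|B i k|%N)
      + (\prod_(i < 3 | B i k < 0) x i ^+ `|B i k|%N)) / x k
   else x j.

Definition mutg (k : 'I_3) (B : 'M[int]_3) (g : 'I_3 -> int) : 'I_3 -> int :=
  fun j => if j == k then
     - g k + \sum_(i < 3 | 0 < B i k) B i k * g i
   else g j.

Definition mutate (k : 'I_3) (s : gseed) : gseed :=
  GSeed (mutx k (sB s) (sx s)) (mutB k (sB s)) (mutg k (sB s) (sg s)).

Definition mutseq (ks : seq 'I_3) (s : gseed) : gseed :=
  foldl (fun t k => mutate k t) s ks.

Definition reachable (s0 s : gseed) : Prop := exists ks, s = mutseq ks s0.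

Definition cv_deg (s0 : gseed) (d : int) (v : KF) : Prop :=
  exists s i, reachable s0 s /\ sx s i = v /\ sg s i = d.

Definition degree_occurs (s0 : gseed) (d : int) : Prop := exists v, cv_deg s0 d v.

Definition finitely_many (s0 : gseed) (d : int) : Prop :=
  exists l : seq KF, forall v, cv_deg s0 d v -> v \in l.

Definition mixed_type (s0 : gseed) : Prop :=
  (exists d, degree_occurs s0 d /\ finitely_many s0 d) /\
  (exists d, degree_occurs s0 d /\ ~ finitely_many s0 d).

Definition balanced (s0 : gseed) : Prop :=
  forall d : int, exists f : {v | cv_deg s0 d v} -> {v | cv_deg s0 (- d) v},
    bijective f.

Definition B0 : 'M[int]_3 :=
  \matrix_(i < 3, j < 3)
    nth 0 (nth [::] [:: [:: 0; 2; -1]; [:: -2; 0; 1]; [:: 1; -1; 0]] i) j.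

Definition g0 : 'I_3 -> int := fun i => nth 0 [:: 1; 1; 2] i.

Definition seed0 : gseed := GSeed xinit B0 g0.

From HB Require Import structures.
From mathcomp Require Import all_boot all_order all_algebra.
From mathcomp Require Import fraction mpoly ring.
From Stdlib Require Import Classical ProofIrrelevance.
Set Implicit Arguments. Unset Strict Implicit. Unset Printing Implicit Defensive.
Import Order.TTheory GRing.Theory Num.Theory.

(* Every cluster variable is evaluated at (1,1,1): exchange relations are
   subtraction-free, so every cluster variable takes a positive value there and
   in particular is nonzero.  Along mutations only 24 pairs (B, g) occur, listed
   in [patterns]; in each of them the cluster variables
   X3 = x_3 and W = (x_3 + (x_1 + x_2)^2) / (x_1 x_2 x_3) are given by one of
   four explicit formulas in the current cluster, and the positions of degree 2
   (resp. -2) hold exactly X3 (resp. W).  Invariance of this description under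
   mutation is a finite computation together with 72 rational function identities.
   Mutating alternately at the two positions of a Kronecker-type seed, while the
   third position holds X3 (resp. W), produces cluster variables u_n of degree 1
   (resp. -1) with u_(n+2) u_n = z + u_(n+1)^2; their values at (1,1,1) strictly
   increase, so the u_n are pairwise distinct.  Cluster variables are countable,
   so any two infinite sets of them are in bijection. *)

Section CountableEnumeration.
Variables (T : eqType) (x0 : T) (P : T -> Prop) (f : nat -> option T).
Hypothesis P_enum : forall v, P v <-> exists n, f n = Some v.
Hypothesis P_infinite : ~ exists l : seq T, forall v, P v -> v \in l.

Definition fresh (n : nat) : bool := (f n != None) && (f n \notin [seq f m | m <- iota 0 n]).

Lemma fresh_neq m n : fresh n -> m < n -> f m != f n.
Proof.
case/andP=> _ fresh_n lt_mn; apply: contraNneq fresh_n => <-.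
by rewrite map_f // mem_iota.
Qed.

Lemma fresh_inj m n : fresh m -> fresh n -> f m = f n -> m = n.
Proof.
move=> fresh_m fresh_n fmn; case: (ltngtP m n) => [lt_mn|lt_nm|//].
  by have := fresh_neq fresh_n lt_mn; rewrite fmn eqxx.
by have := fresh_neq fresh_m lt_nm; rewrite fmn eqxx.
Qed.

Lemma exists_fresh v : P v -> exists n, fresh n && (f n == Some v).
Proof.
move=> /P_enum [n0 fn0]; have hex : exists n, f n == Some v by exists n0; rewrite fn0.
case: (ex_minnP hex) => n /eqP fn min_n; exists n; rewrite fn eqxx andbT /fresh fn /=.
apply/negP => /mapP [m]; rewrite mem_iota => /andP [_ lt_mn] /esym /eqP /min_n.
by rewrite leqNgt lt_mn.
Qed.

Lemma fresh_unbounded N : exists2 n, N <= n & fresh n.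
Proof.
apply: NNPP => no_fresh; apply: P_infinite.
exists [seq odflt x0 (f m) | m <- iota 0 N] => v /exists_fresh [n /andP [fresh_n /eqP fn]].
have lt_nN : n < N by rewrite ltnNge; apply/negP => le_Nn; apply: no_fresh; exists n.
by apply/mapP; exists n; rewrite ?mem_iota ?fn.
Qed.

Definition rank (n : nat) : nat := count fresh (iota 0 n).

Lemma rankS n : rank n.+1 = rank n + fresh n.
Proof. by rewrite /rank -addn1 iotaD count_cat /= addn0. Qed.

Lemma rank_mono : {homo rank : m n / m <= n}.
Proof. by move=> m n /subnKC <-; rewrite /rank iotaD count_cat leq_addr. Qed.

Lemma rank_lt m n : fresh m -> m < n -> rank m < rank n.
Proof.
move=> fresh_m lt_mn; apply: leq_trans _ (rank_mono lt_mn).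
by rewrite rankS fresh_m addn1.
Qed.

Lemma rank_inj m n : fresh m -> fresh n -> rank m = rank n -> m = n.
Proof.
move=> fresh_m fresh_n rank_mn; case: (ltngtP m n) => [lt_mn|lt_nm|//].
  by have := rank_lt fresh_m lt_mn; rewrite rank_mn ltnn.
by have := rank_lt fresh_n lt_nm; rewrite rank_mn ltnn.
Qed.

Lemma rank_unbounded k : exists N, k < rank N.
Proof.
elim: k => [|k [N lt_kN]].
  by have [n _ fresh_n] := fresh_unbounded 0; exists n.+1; rewrite rankS fresh_n addn1.
have [n le_Nn fresh_n] := fresh_unbounded N; exists n.+1.
by rewrite rankS fresh_n addn1 ltnS (leq_trans lt_kN) ?rank_mono.
Qed.

Lemma rank_onto k : exists n, fresh n && (rank n == k).
Proof.
case: (ex_minnP (rank_unbounded k)) => [[|n] lt_k_rank min_N]; first by [].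
have le_rank : rank n <= k by rewrite leqNgt; apply/negP => /min_N; rewrite ltnn.
move: lt_k_rank; rewrite rankS; case fresh_n: (fresh n); rewrite ?addn0 ?addn1 => lt_k.
  by exists n; rewrite fresh_n eqn_leq le_rank -ltnS lt_k.
by move: le_rank; rewrite leqNgt lt_k.
Qed.

Lemma fresh_P n : fresh n -> P (odflt x0 (f n)).
Proof. by case/andP; case fn: (f n) => [v|] // _ _; apply/P_enum; exists n. Qed.

Definition first_index (x : {v | P v}) : nat := xchoose (exists_fresh (proj2_sig x)).

Definition enum_at (k : nat) : {v | P v} :=
  exist P _ (fresh_P (proj1 (andP (xchooseP (rank_onto k))))).

Lemma fresh_Some n : fresh n -> f n = Some (odflt x0 (f n)).
Proof. by case/andP; case: (f n). Qed.

Lemma enum_at_bij : bijective enum_at.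
Proof.
exists (fun x => rank (first_index x)) => [k|[v Pv]].
  have /andP [fresh_n /eqP fn] := xchooseP (exists_fresh (proj2_sig (enum_at k))).
  have /andP [fresh_k /eqP rank_k] := xchooseP (rank_onto k).
  by rewrite /first_index (fresh_inj fresh_n fresh_k) // fn /= -fresh_Some.
have /andP [fresh_n /eqP fn] := xchooseP (exists_fresh Pv).
have /andP [fresh_k /eqP rank_k] := xchooseP (rank_onto (rank (first_index (exist P v Pv)))).
apply: subset_eq_compat; rewrite (rank_inj fresh_k fresh_n rank_k).
by rewrite /first_index fn.
Qed.
End CountableEnumeration.

Local Open Scope ring_scope.

Section SigBijections.
Variables (T : Type) (P Q : T -> Prop).

Lemma bij_sig_empty : ~ (exists v, P v) -> ~ (exists v, Q v) ->
  exists f : {v | P v} -> {v | Q v}, bijective f.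
Proof.
move=> P0 Q0; have P0' (x : {v | P v}) : False by case: x => v Pv; apply: P0; exists v.
have Q0' (y : {v | Q v}) : False by case: y => v Qv; apply: Q0; exists v.
exists (fun x => False_rect _ (P0' x)), (fun y => False_rect _ (Q0' y)) => [x|y].
  by case: (P0' x).
by case: (Q0' y).
Qed.

Lemma bij_sig_singleton a b : (forall v, P v <-> v = a) -> (forall v, Q v <-> v = b) ->
  exists f : {v | P v} -> {v | Q v}, bijective f.
Proof.
move=> Pa Qb; exists (fun=> exist Q b (proj2 (Qb b) erefl)), (fun=> exist P a (proj2 (Pa a) erefl)).
  by move=> [v Pv]; apply: subset_eq_compat; apply/esym/Pa.
by move=> [v Qv]; apply: subset_eq_compat; apply/esym/Qb.
Qed.

End SigBijections.

Section ValueAt.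
Variables (n : nat) (R : fieldType) (a : 'I_n -> R).

Definition value_at (v : {fraction {mpoly R[n]}}) (r : R) : Prop :=
  exists p q : {mpoly R[n]},
    [/\ v = tofrac p / tofrac q, q.@[a] != 0 & p.@[a] = r * q.@[a]].

Lemma tofrac_meval_neq0 (q : {mpoly R[n]}) : q.@[a] != 0 -> tofrac q != 0.
Proof. by apply: contra_neq => /eqP; rewrite tofrac_eq0 => /eqP ->; rewrite meval0. Qed.

Lemma value_at_tofrac p : value_at (tofrac p) p.@[a].
Proof. by exists p, 1; rewrite tofrac1 divr1 meval1 mulr1 oner_neq0. Qed.

Lemma value_at1 : value_at 1 1.
Proof. by rewrite -tofrac1 -(meval1 a); apply: value_at_tofrac. Qed.

Lemma value_atD u v r s : value_at u r -> value_at v s -> value_at (u + v) (r + s).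
Proof.
move=> [p [q [-> q0 pE]]] [p' [q' [-> q0' pE']]].
exists (p * q' + p' * q), (q * q'); split.
- by rewrite addf_div ?tofrac_meval_neq0 // tofracD !tofracM.
- by rewrite mevalM mulf_neq0.
- by rewrite mevalD !mevalM pE pE'; ring.
Qed.

Lemma value_atM u v r s : value_at u r -> value_at v s -> value_at (u * v) (r * s).
Proof.
move=> [p [q [-> q0 pE]]] [p' [q' [-> q0' pE']]].
exists (p * p'), (q * q'); split.
- by rewrite mulf_div !tofracM.
- by rewrite mevalM mulf_neq0.
- by rewrite !mevalM pE pE'; ring.
Qed.

Lemma value_atV v s : value_at v s -> s != 0 -> value_at v^-1 s^-1.
Proof.
move=> [p [q [-> q0 pE]]] s0.
have p0 : p.@[a] != 0 by rewrite pE mulf_neq0.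
exists q, p; split.
- by rewrite invf_div.
- exact: p0.
- by rewrite pE mulrA mulVf // mul1r.
Qed.

Lemma value_atX v r k : value_at v r -> value_at (v ^+ k) (r ^+ k).
Proof.
move=> vr; elim: k => [|k IH]; first exact: value_at1.
by rewrite !exprS; apply: value_atM.
Qed.

Lemma value_at_inj v r s : value_at v r -> value_at v s -> r = s.
Proof.
move=> [p [q [-> q0 pE]]] [p' [q' [E q0' pE']]].
move/eqP: E; rewrite eqr_div ?tofrac_meval_neq0 // -!tofracM tofrac_eq.
move=> /eqP /(congr1 (meval a)); rewrite !mevalM pE pE' mulrAC.
by move/(mulIf q0)/(mulIf q0').
Qed.

Lemma value_at_neq0 v r : value_at v r -> r != 0 -> v != 0.
Proof.
move=> [p [q [-> q0 pE]]] r0.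
have p0 : p.@[a] != 0 by rewrite pE mulf_neq0.
by rewrite mulf_neq0 ?invr_eq0 ?tofrac_meval_neq0.
Qed.

End ValueAt.

Section PositiveAt.
Variables (n : nat) (R : numFieldType) (a : 'I_n -> R).

Definition positive_at (v : {fraction {mpoly R[n]}}) : Prop :=
  exists2 r, 0 < r & value_at a v r.

Lemma positive_at_neq0 v : positive_at v -> v != 0.
Proof. by move=> [r r_gt0 vr]; apply: value_at_neq0 vr _; rewrite gt_eqF. Qed.

Lemma positive_at1 : positive_at 1.
Proof. by exists 1; [exact: ltr01 | exact: value_at1]. Qed.

Lemma positive_atD u v : positive_at u -> positive_at v -> positive_at (u + v).
Proof. by move=> [r ? ur] [s ? vs]; exists (r + s); [exact: addr_gt0 | exact: value_atD]. Qed.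

Lemma positive_atM u v : positive_at u -> positive_at v -> positive_at (u * v).
Proof. by move=> [r ? ur] [s ? vs]; exists (r * s); [exact: mulr_gt0 | exact: value_atM]. Qed.

Lemma positive_atV v : positive_at v -> positive_at v^-1.
Proof.
move=> [r r_gt0 vr]; exists r^-1; first by rewrite invr_gt0.
by apply: value_atV vr _; rewrite gt_eqF.
Qed.

Lemma positive_atX v k : positive_at v -> positive_at (v ^+ k).
Proof.
move=> v_pos; elim: k => [|k IH]; first exact: positive_at1.
by rewrite exprS; apply: positive_atM.
Qed.

Lemma positive_at_prod (I : finType) (P : pred I) (F : I -> {fraction {mpoly R[n]}}) :
  (forall i, positive_at (F i)) -> positive_at (\prod_(i | P i) F i).
Proof. by move=> F_pos; apply: big_ind => //; [exact: positive_at1 | exact: positive_atM]. Qed.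

End PositiveAt.

Section Recurrence.
Variables (R : numFieldType) (K r0 r1 : R).

Definition recur (n : nat) : R :=
  (iter n (fun r => (r.2, (K + r.2 ^+ 2) / r.1)) (r0, r1)).1.

Lemma recurSS n : recur n.+2 = (K + recur n.+1 ^+ 2) / recur n.
Proof. by []. Qed.

Hypotheses (K_gt0 : 0 < K) (r0_gt0 : 0 < r0) (r0_le_r1 : r0 <= r1).

Lemma recur_gt0_le n : 0 < recur n <= recur n.+1.
Proof.
elim: n => [|n /andP [r_gt0 r_le]]; first by rewrite r0_gt0.
have r1_gt0 : 0 < recur n.+1 by apply: lt_le_trans r_le.
rewrite r1_gt0 recurSS ler_pdivlMr //= -[leLHS]add0r.
by apply: lerD (ltW K_gt0) _; rewrite expr2 ler_pM2l.
Qed.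

Lemma recur_incr : {homo (fun n => recur n.+1) : m n / (m < n)%N >-> m < n}.
Proof.
apply: homo_ltn => [y x z|n]; first exact: lt_trans.
have /andP [r_gt0 r_le] := recur_gt0_le n.
have r1_gt0 : 0 < recur n.+1 by apply: lt_le_trans r_le.
rewrite recurSS ltr_pdivlMr // -[ltLHS]add0r.
by apply: ltr_leD K_gt0 _; rewrite expr2 ler_pM2l.
Qed.

Lemma recur_neq0 n : recur n != 0.
Proof. by have /andP [r_gt0 _] := recur_gt0_le n; rewrite gt_eqF. Qed.

End Recurrence.

Lemma value_at_recur (n : nat) (R : numFieldType) (a : 'I_n -> R)
    (u : nat -> {fraction {mpoly R[n]}}) z K r0 r1 :
  0 < K -> 0 < r0 <= r1 -> value_at a z K ->
  value_at a (u 0%N) r0 -> value_at a (u 1%N) r1 ->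
  (forall m, u m.+2 = (z + u m.+1 ^+ 2) / u m) ->
  forall m, value_at a (u m) (recur K r0 r1 m).
Proof.
move=> K_gt0 /andP [r0_gt0 r0_le] zK u0 u1 uSS m.
suff /(_ m) [] : forall m, value_at a (u m) (recur K r0 r1 m) /\
                           value_at a (u m.+1) (recur K r0 r1 m.+1) by [].
elim=> [|{}m [um um1]]; first by split.
split=> //; rewrite uSS recurSS; apply: value_atM.
  by apply: value_atD => //; apply: value_atX.
by apply: value_atV => //; apply: recur_neq0.
Qed.

Definition o0 : 'I_3 := @Ordinal 3 0 isT.
Definition o1 : 'I_3 := @Ordinal 3 1 isT.
Definition o2 : 'I_3 := @Ordinal 3 2 isT.

Lemma ord3P (P : 'I_3 -> Prop) : P o0 -> P o1 -> P o2 -> forall i, P i.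
Proof.
move=> P0 P1 P2 [[|[|[|//]]] lt_i3].
- by rewrite (_ : Ordinal lt_i3 = o0) //; apply: val_inj.
- by rewrite (_ : Ordinal lt_i3 = o1) //; apply: val_inj.
- by rewrite (_ : Ordinal lt_i3 = o2) //; apply: val_inj.
Qed.

Lemma big_ord3 (R : Type) (op : R -> R -> R) (idx : R) (F : 'I_3 -> R) :
  \big[op/idx]_(i < 3) F i = op (F o0) (op (F o1) (op (F o2) idx)).
Proof.
by rewrite !big_ord_recl big_ord0; congr (op (F _) (op (F _) (op (F _) _))); apply: val_inj.
Qed.

Definition mx3 (b : seq (seq int)) : 'M[int]_3 :=
  \matrix_(i < 3, j < 3) nth 0 (nth [::] b i) j.

Definition posp (z : int) : nat := if z is Posz n then n else 0.
Definition negp (z : int) : nat := if z is Negz n then n.+1 else 0.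

Lemma exprz_posp (R : pzRingType) (x : R) (z : int) :
  (if 0 < z then x ^+ `|z|%N else 1) = x ^+ posp z.
Proof. by case: z => [[|n]|n]. Qed.

Lemma exprz_negp (R : pzRingType) (x : R) (z : int) :
  (if z < 0 then x ^+ `|z|%N else 1) = x ^+ negp z.
Proof. by case: z => [[|n]|n]. Qed.

Definition exchange_num {F : pzSemiRingType} (k : 'I_3) (B : 'M[int]_3) (x : 'I_3 -> F) : F :=
  \prod_(i < 3) x i ^+ posp (B i k) + \prod_(i < 3) x i ^+ negp (B i k).

(* [mutx] over an arbitrary field, where [field] checks exchange identities quickly. *)
Definition mutvar {F : fieldType} (k : 'I_3) (B : 'M[int]_3) (x : 'I_3 -> F) (j : 'I_3) : F :=
  if j == k then exchange_num k B x / x k else x j.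

Lemma mutxE k B x : mutx k B x =1 mutvar k B x.
Proof.
move=> j; rewrite /mutx /mutvar; case: (j == k) => //; congr ((_ + _) / _); rewrite big_mkcond.
  by apply: eq_bigr => i _; apply: exprz_posp.
by apply: eq_bigr => i _; apply: exprz_negp.
Qed.

(* Unlike matrices, these list versions of [mutB] and [mutg] compute under [vm_compute]. *)
Definition mutB_seq (k : nat) (b : seq (seq int)) : seq (seq int) :=
  let e i j := nth 0 (nth [::] b i) j in
  [seq [seq if (i == k) || (j == k) then - e i j
            else e i j + Num.sg (e i k) * Num.max (e i k * e k j) 0
        | j <- iota 0 3] | i <- iota 0 3].

Lemma mutB_mx3 (k : 'I_3) b : mutB k (mx3 b) = mx3 (mutB_seq k b).
Proof.
apply/matrixP => i j; rewrite !mxE /mutB_seq.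
by rewrite (nth_map 0%N) ?size_iota // (nth_map 0%N) ?size_iota // !nth_iota.
Qed.

Lemma mulz_posp (z a : int) : (if 0 < z then z * a else 0) = (posp z)%:Z * a.
Proof. by case: z => [[|n]|n]; rewrite ?mul0r. Qed.

Definition mutg_seq (k : nat) (b : seq (seq int)) (g : seq int) : seq int :=
  let e i := (posp (nth 0 (nth [::] b i) k))%:Z * nth 0 g i in
  [seq if j == k then - nth 0 g k + (e 0%N + (e 1%N + (e 2%N + 0))) else nth 0 g j
  | j <- iota 0 3].

Lemma mutg_mx3 (k : 'I_3) b (g : 'I_3 -> int) gl :
  (forall i, g i = nth 0 gl i) -> forall j, mutg k (mx3 b) g j = nth 0 (mutg_seq k b gl) j.
Proof.
move=> gE j; rewrite /mutg /mutg_seq (nth_map 0%N) ?size_iota // nth_iota //.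
rewrite add0n -[(j : nat) == k]/(j == k); case: (j == k); last exact: gE.
rewrite big_mkcond big_ord3 !mxE !gE /=.
by rewrite !mulz_posp.
Qed.

Lemma sx_mutate_neq k s i : i != k -> sx (mutate k s) i = sx s i.
Proof. by rewrite /= /mutx => /negbTE ->. Qed.

Definition cluster_positive (a : 'I_3 -> rat) (s : gseed) : Prop :=
  forall i, positive_at a (sx s i).

Lemma exchange_num_positive a k B (x : 'I_3 -> KF) :
  (forall i, positive_at a (x i)) -> positive_at a (exchange_num k B x).
Proof.
move=> x_pos; apply: positive_atD; apply: positive_at_prod => i; exact: positive_atX.
Qed.

Lemma mutate_positive a k s : cluster_positive a s -> cluster_positive a (mutate k s).
Proof.
move=> s_pos i; rewrite /= mutxE /mutvar; case: (i == k) => //.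
by apply: positive_atM; [exact: exchange_num_positive | exact: positive_atV].
Qed.

Lemma mutseq_positive a ks s : cluster_positive a s -> cluster_positive a (mutseq ks s).
Proof. by elim: ks s => [|k ks IH] s s_pos //=; apply/IH/mutate_positive. Qed.

Definition one3 : 'I_3 -> rat := fun=> 1.

Lemma seed0_value i : value_at one3 (sx seed0 i) 1.
Proof. by have := value_at_tofrac one3 'X_i; rewrite mevalXU. Qed.

Lemma seed0_positive : cluster_positive one3 seed0.
Proof. by move=> i; exists 1; last exact: seed0_value. Qed.

Lemma value_at_exchange_num a k B (x : 'I_3 -> KF) (r : 'I_3 -> rat) :
  (forall i, value_at a (x i) (r i)) -> value_at a (exchange_num k B x) (exchange_num k B r).
Proof.
move=> xr; apply: value_atD.
all: apply: (big_ind2 (value_at a)) => [|u v t w|i _]; first exact: value_at1.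
all: by [apply: value_atM | apply: value_atX].
Qed.

Lemma mutate_value a k s (r : 'I_3 -> rat) : (forall i, value_at a (sx s i) (r i)) ->
  r k != 0 -> forall i, value_at a (sx (mutate k s) i) (mutvar k (sB s) r i).
Proof.
move=> sr rk i; rewrite /= mutxE /mutvar; case: (i == k) => //.
by apply: value_atM; [exact: value_at_exchange_num | exact: value_atV].
Qed.

Inductive formula :=
  | FVar of 'I_3
  | FLin of 'I_3 & 'I_3 & 'I_3
  | FMix of 'I_3 & 'I_3 & 'I_3
  | FQuad of 'I_3 & 'I_3 & 'I_3.

Definition feval {F : fieldType} (x : 'I_3 -> F) (f : formula) : F :=
  match f with
  | FVar a => x a
  | FLin a b c => (x a + x b) / x c
  | FMix a b c => (1 + x c * (x a + x b)) / (x a * x b)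
  | FQuad a b c => (x c + (x a + x b) ^+ 2) / (x a * x b * x c)
  end.

Definition is_var (f : formula) (i : 'I_3) : bool := if f is FVar j then j == i else false.

(* A pattern records the exchange matrix and degree vector of a seed, the
   expressions of X3 and W in its cluster, and the patterns reached by mutation
   at o0, o1 and o2. *)
Record pattern := Pattern {
  pB : seq (seq int); pg : seq int; pX3 : formula; pW : formula; pnext : seq nat }.

Definition patterns : seq pattern := [::
  Pattern [:: [:: 0; 2; -1]; [:: -2; 0; 1]; [:: 1; -1; 0]] [:: 1; 1; 2]
          (FVar o2) (FQuad o0 o1 o2) [:: 1; 1; 2];
  Pattern [:: [:: 0; -2; 1]; [:: 2; 0; -1]; [:: -1; 1; 0]] [:: 1; 1; 2]
          (FVar o2) (FQuad o0 o1 o2) [:: 0; 0; 3];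
  Pattern [:: [:: 0; 1; 1]; [:: -1; 0; -1]; [:: -1; 1; 0]] [:: 1; 1; -1]
          (FLin o0 o1 o2) (FMix o0 o1 o2) [:: 4; 5; 0];
  Pattern [:: [:: 0; -1; -1]; [:: 1; 0; 1]; [:: 1; -1; 0]] [:: 1; 1; -1]
          (FLin o0 o1 o2) (FMix o0 o1 o2) [:: 6; 7; 1];
  Pattern [:: [:: 0; -1; -1]; [:: 1; 0; -1]; [:: 1; 1; 0]] [:: -1; 1; -1]
          (FMix o0 o2 o1) (FLin o0 o2 o1) [:: 2; 8; 9];
  Pattern [:: [:: 0; -1; 1]; [:: 1; 0; 1]; [:: -1; -1; 0]] [:: 1; -1; -1]
          (FMix o1 o2 o0) (FLin o1 o2 o0) [:: 10; 2; 11];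
  Pattern [:: [:: 0; 1; 1]; [:: -1; 0; 1]; [:: -1; -1; 0]] [:: -1; 1; -1]
          (FMix o0 o2 o1) (FLin o0 o2 o1) [:: 3; 12; 13];
  Pattern [:: [:: 0; 1; -1]; [:: -1; 0; -1]; [:: 1; 1; 0]] [:: 1; -1; -1]
          (FMix o1 o2 o0) (FLin o1 o2 o0) [:: 14; 3; 15];
  Pattern [:: [:: 0; 1; -2]; [:: -1; 0; 1]; [:: 2; -1; 0]] [:: -1; -2; -1]
          (FQuad o0 o2 o1) (FVar o1) [:: 12; 4; 12];
  Pattern [:: [:: 0; -1; 1]; [:: 1; 0; 1]; [:: -1; -1; 0]] [:: -1; 1; 1]
          (FLin o1 o2 o0) (FMix o1 o2 o0) [:: 16; 17; 4];
  Pattern [:: [:: 0; 1; -1]; [:: -1; 0; 2]; [:: 1; -2; 0]] [:: -2; -1; -1]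
          (FQuad o1 o2 o0) (FVar o0) [:: 5; 14; 14];
  Pattern [:: [:: 0; -1; -1]; [:: 1; 0; -1]; [:: 1; 1; 0]] [:: 1; -1; 1]
          (FLin o0 o2 o1) (FMix o0 o2 o1) [:: 17; 18; 5];
  Pattern [:: [:: 0; -1; 2]; [:: 1; 0; -1]; [:: -2; 1; 0]] [:: -1; -2; -1]
          (FQuad o0 o2 o1) (FVar o1) [:: 8; 6; 8];
  Pattern [:: [:: 0; 1; -1]; [:: -1; 0; -1]; [:: 1; 1; 0]] [:: -1; 1; 1]
          (FLin o1 o2 o0) (FMix o1 o2 o0) [:: 19; 20; 6];
  Pattern [:: [:: 0; -1; 1]; [:: 1; 0; -2]; [:: -1; 2; 0]] [:: -2; -1; -1]
          (FQuad o1 o2 o0) (FVar o0) [:: 7; 10; 10];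
  Pattern [:: [:: 0; 1; 1]; [:: -1; 0; 1]; [:: -1; -1; 0]] [:: 1; -1; 1]
          (FLin o0 o2 o1) (FMix o0 o2 o1) [:: 20; 21; 7];
  Pattern [:: [:: 0; 1; -1]; [:: -1; 0; 2]; [:: 1; -2; 0]] [:: 2; 1; 1]
          (FVar o0) (FQuad o1 o2 o0) [:: 9; 19; 19];
  Pattern [:: [:: 0; 1; 1]; [:: -1; 0; -1]; [:: -1; 1; 0]] [:: -1; -1; 1]
          (FMix o0 o1 o2) (FLin o0 o1 o2) [:: 11; 9; 22];
  Pattern [:: [:: 0; 1; -2]; [:: -1; 0; 1]; [:: 2; -1; 0]] [:: 1; 2; 1]
          (FVar o1) (FQuad o0 o2 o1) [:: 21; 11; 21];
  Pattern [:: [:: 0; -1; 1]; [:: 1; 0; -2]; [:: -1; 2; 0]] [:: 2; 1; 1]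
          (FVar o0) (FQuad o1 o2 o0) [:: 13; 16; 16];
  Pattern [:: [:: 0; -1; -1]; [:: 1; 0; 1]; [:: 1; -1; 0]] [:: -1; -1; 1]
          (FMix o0 o1 o2) (FLin o0 o1 o2) [:: 15; 13; 23];
  Pattern [:: [:: 0; -1; 2]; [:: 1; 0; -1]; [:: -2; 1; 0]] [:: 1; 2; 1]
          (FVar o1) (FQuad o0 o2 o1) [:: 18; 15; 18];
  Pattern [:: [:: 0; 2; -1]; [:: -2; 0; 1]; [:: 1; -1; 0]] [:: -1; -1; -2]
          (FQuad o0 o1 o2) (FVar o2) [:: 23; 23; 17];
  Pattern [:: [:: 0; -2; 1]; [:: 2; 0; -1]; [:: -1; 1; 0]] [:: -1; -1; -2]
          (FQuad o0 o1 o2) (FVar o2) [:: 22; 22; 20]].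

Definition pat0 : pattern := Pattern [::] [::] (FVar o0) (FVar o0) [::].
Definition pat (n : nat) : pattern := nth pat0 patterns n.
Definition pat_next (n : nat) (k : 'I_3) : nat := nth 0%N (pnext (pat n)) k.

Definition all_patterns (P : nat -> 'I_3 -> bool) : bool :=
  all (fun n => all (P n) [:: o0; o1; o2]) (iota 0 (size patterns)).

Lemma all_patternsP P : all_patterns P -> forall n k, (n < size patterns)%N -> P n k.
Proof.
move=> /allP all_n n k n_lt.
have /allP : all (P n) [:: o0; o1; o2] by apply: all_n; rewrite mem_iota.
by apply; move: k; apply: ord3P.
Qed.

Definition step_ok (n : nat) (k : 'I_3) : bool :=
  [&& (pat_next n k < size patterns)%N,
      pB (pat (pat_next n k)) == mutB_seq k (pB (pat n)) &
      pg (pat (pat_next n k)) == mutg_seq k (pB (pat n)) (pg (pat n))].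

Definition degrees_ok (n : nat) (i : 'I_3) : bool :=
  let d := nth 0 (pg (pat n)) i in
  [&& d \in [:: 1; -1; 2; -2], (d == 2) ==> is_var (pX3 (pat n)) i
    & (d == -2) ==> is_var (pW (pat n)) i].

Lemma patterns_closed : all_patterns step_ok.
Proof. by vm_compute. Qed.

Lemma patterns_degrees : all_patterns degrees_ok.
Proof. by vm_compute. Qed.

Lemma pattern_step n k : (n < size patterns)%N -> step_ok n k.
Proof. exact: all_patternsP patterns_closed n k. Qed.

Lemma eq_feval (F : fieldType) (x y : 'I_3 -> F) f : x =1 y -> feval x f = feval y f.
Proof. by move=> xy; case: f => *; rewrite /= !xy. Qed.

Lemma is_varP (F : fieldType) (x : 'I_3 -> F) f i : is_var f i -> feval x f = x i.
Proof. by case: f => //= j /eqP ->. Qed.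

Lemma feval_mutate (F : fieldType) n k (x : 'I_3 -> F) :
  (n < size patterns)%N -> (forall i, x i != 0) ->
  exchange_num k (mx3 (pB (pat n))) x != 0 ->
  let x' := mutvar k (mx3 (pB (pat n))) x in
  feval x (pX3 (pat n)) = feval x' (pX3 (pat (pat_next n k))) /\
  feval x (pW (pat n)) = feval x' (pW (pat (pat_next n k))).
Proof.
move=> + x_neq0; have x0 := x_neq0 o0; have x1 := x_neq0 o1; have x2 := x_neq0 o2.
do 24 try case: n => [|n]; last by [].
all: move=> _; move: k; apply: ord3P => /=.
all: rewrite /mutvar /exchange_num !big_ord3 !mxE /= ?expr0 ?expr1 ?mulr1 ?mul1r => num_neq0.
all: split; field; rewrite ?x0 ?x1 ?x2 ?andbT //=.
all: by apply: contra_neq num_neq0 => num0; rewrite -num0; ring.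
Qed.

Definition X3 : KF := xinit o2.
Definition W : KF := feval xinit (FQuad o0 o1 o2).

Definition fits (n : nat) (s : gseed) : Prop :=
  [/\ sB s = mx3 (pB (pat n)), forall i, sg s i = nth 0 (pg (pat n)) i,
      X3 = feval (sx s) (pX3 (pat n)) & W = feval (sx s) (pW (pat n))].

Lemma fits_mutate n k s : (n < size patterns)%N -> cluster_positive one3 s ->
  fits n s -> fits (pat_next n k) (mutate k s).
Proof.
move=> n_lt s_pos [sBE sgE X3E WE].
have /and3P [_ /eqP BE /eqP gE] := pattern_step k n_lt.
have [|X3E' WE'] := feval_mutate (k := k) n_lt (fun i => positive_at_neq0 (s_pos i)).
  by rewrite -sBE; apply/positive_at_neq0/exchange_num_positive.
split=> /=.
- by rewrite sBE mutB_mx3 BE.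
- by move=> i; rewrite sBE (mutg_mx3 _ _ sgE) gE.
- by rewrite X3E X3E' sBE; apply: eq_feval => i; rewrite mutxE.
- by rewrite WE WE' sBE; apply: eq_feval => i; rewrite mutxE.
Qed.

Lemma fits_seed0 : fits 0 seed0.
Proof. by []. Qed.

Lemma mutseq_fits ks s n : (n < size patterns)%N -> cluster_positive one3 s -> fits n s ->
  exists2 m, (m < size patterns)%N & fits m (mutseq ks s).
Proof.
elim: ks s n => [|k ks IH] s n n_lt s_pos s_fits /=; first by exists n.
have /andP [next_lt _] := pattern_step k n_lt.
by apply: IH next_lt (mutate_positive _ s_pos) (fits_mutate _ n_lt s_pos s_fits).
Qed.

Lemma reachable_degree s i : reachable seed0 s ->
  [/\ sg s i \in [:: 1; -1; 2; -2], sg s i = 2 -> sx s i = X3 & sg s i = -2 -> sx s i = W].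
Proof.
move=> [ks ->].
have [n n_lt [_ sgE X3E WE]] := @mutseq_fits ks seed0 0 isT seed0_positive fits_seed0.
have /and3P [d_in d2 dm2] := all_patternsP patterns_degrees i n_lt.
rewrite !sgE.
split=> // [/eqP|/eqP] d_eq.
- by rewrite X3E (is_varP _ (implyP d2 d_eq)).
- by rewrite WE (is_varP _ (implyP dm2 d_eq)).
Qed.

Lemma not_finitely_many_inj s0 d (u : nat -> KF) :
  (forall n, cv_deg s0 d (u n)) -> injective u -> ~ finitely_many s0 d.
Proof.
move=> u_deg u_inj [l l_all].
have u_uniq : uniq [seq u n | n <- iota 0 (size l).+1] by rewrite map_inj_uniq ?iota_uniq.
have /(uniq_leq_size u_uniq) : {subset [seq u n | n <- iota 0 (size l).+1] <= l}.
  by move=> _ /mapP [n _ ->]; apply: l_all.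
by rewrite size_map size_iota ltnn.
Qed.

Section AlternatingChain.
Variables (s : gseed) (p q : nat) (i j m : 'I_3) (K r0 r1 : rat).
Hypotheses (p_lt : (p < size patterns)%N) (s_pos : cluster_positive one3 s) (s_fits : fits p s).
Hypotheses (pq : pat_next p i = q) (qp : pat_next q j = p).
Hypotheses (ij : i != j) (im : i != m) (jm : j != m).
Hypothesis exchange_p :
  forall x : 'I_3 -> KF, exchange_num i (mx3 (pB (pat p))) x = x m + x j ^+ 2.
Hypothesis exchange_q :
  forall x : 'I_3 -> KF, exchange_num j (mx3 (pB (pat q))) x = x m + x i ^+ 2.

Definition alt (n : nat) : 'I_3 := if odd n then j else i.
Definition chain (n : nat) : gseed := mutseq [seq alt l | l <- iota 0 n] s.
Definition chain_var (n : nat) : KF := sx (chain n) (alt n).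

Lemma chainS n : chain n.+1 = mutate (alt n) (chain n).
Proof. by rewrite /chain -[n.+1]addn1 iotaD map_cat /mutseq foldl_cat. Qed.

Lemma chain_fits n : fits (if odd n then q else p) (chain n).
Proof.
have q_lt : (q < size patterns)%N by have /andP [] := pattern_step i p_lt; rewrite pq.
elim: n => [|n IH] //; rewrite chainS /= /alt.
have chain_pos : cluster_positive one3 (chain n) by apply: mutseq_positive.
by case: (odd n) IH => /= IH; [rewrite -qp | rewrite -pq]; apply: fits_mutate.
Qed.

Lemma alt_neq_m n : alt n != m.
Proof. by rewrite /alt; case: (odd n). Qed.

Lemma altS_neq n : alt n.+1 != alt n.
Proof. by rewrite /alt /=; case: (odd n); rewrite // eq_sym. Qed.

Lemma chain_fixed n : sx (chain n) m = sx s m.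
Proof. by elim: n => [|n IH] //; rewrite chainS sx_mutate_neq 1?eq_sym ?alt_neq_m. Qed.

Lemma chain_var_rec n : chain_var n.+2 = (sx s m + chain_var n.+1 ^+ 2) / chain_var n.
Proof.
have altSS : alt n.+2 = alt n by rewrite /alt /= negbK.
rewrite /chain_var altSS !chainS sx_mutate_neq 1?eq_sym ?altS_neq //.
rewrite [sx (mutate _ _) (alt n.+1)]sx_mutate_neq ?altS_neq //.
rewrite /= mutxE /mutvar eqxx -(chain_fixed n).
have [sBE _ _ _] := chain_fits n; rewrite sBE /alt.
by rewrite /=; case: (odd n); rewrite /= ?exchange_p ?exchange_q.
Qed.

Lemma chain_var_deg d : reachable seed0 s ->
  nth 0 (pg (pat p)) i = d -> nth 0 (pg (pat q)) j = d -> forall n, cv_deg seed0 d (chain_var n).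
Proof.
move=> [ks sE] dp dq n; exists (chain n), (alt n); split; last split=> //.
  by exists (ks ++ [seq alt l | l <- iota 0 n]); rewrite /mutseq foldl_cat -/(mutseq ks seed0) -sE.
have [_ sgE _ _] := chain_fits n; rewrite sgE /alt.
by case: (odd n).
Qed.

Lemma chain_var_inj : 0 < K -> 0 < r0 <= r1 ->
  value_at one3 (sx s m) K -> value_at one3 (sx s i) r0 -> value_at one3 (sx s j) r1 ->
  injective (fun n => chain_var n.+1).
Proof.
move=> K_gt0 r01 zK u0 u1; have /andP [r0_gt0 r0_le] := r01.
have u1' : value_at one3 (chain_var 1) r1.
  by rewrite /chain_var chainS sx_mutate_neq // eq_sym.
have u_val := value_at_recur K_gt0 r01 zK u0 u1' chain_var_rec.
have recur_inj := inc_inj (le_mono (recur_incr K_gt0 r0_gt0 r0_le)).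
by move=> k l /= ukl; apply: recur_inj; apply: value_at_inj (u_val k.+1) _; rewrite ukl.
Qed.

Lemma chain_infinite d : reachable seed0 s ->
  nth 0 (pg (pat p)) i = d -> nth 0 (pg (pat q)) j = d -> 0 < K -> 0 < r0 <= r1 ->
  value_at one3 (sx s m) K -> value_at one3 (sx s i) r0 -> value_at one3 (sx s j) r1 ->
  ~ finitely_many seed0 d.
Proof.
move=> s_reach dp dq K_gt0 r01 zK u0 u1.
apply: (@not_finitely_many_inj _ _ (fun n => chain_var n.+1)).
  by move=> n; apply: chain_var_deg.
exact: chain_var_inj r01 zK u0 u1.
Qed.

End AlternatingChain.

Lemma seed0_reachable : reachable seed0 seed0.
Proof. by exists [::]. Qed.

Lemma degree1_infinite : ~ finitely_many seed0 1.
Proof.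
apply: (chain_infinite (s := seed0) (p := 0) (q := 1) (i := o0) (j := o1) (m := o2)
                       (K := 1) (r0 := 1) (r1 := 1)) => //.
- exact: seed0_positive.
- by move=> x; rewrite /exchange_num !big_ord3 !mxE /= !expr0 !expr1 !mul1r !mulr1.
- by move=> x; rewrite /exchange_num !big_ord3 !mxE /= !expr0 !expr1 !mul1r !mulr1.
- exact: seed0_reachable.
all: exact: seed0_value.
Qed.

Definition seedW : gseed := mutseq [:: o2; o0; o1] seed0.

Lemma seedW_reachable : reachable seed0 seedW.
Proof. by exists [:: o2; o0; o1]. Qed.

Definition valuesW : 'I_3 -> rat :=
  mutvar o1 (mx3 (pB (pat 4))) (mutvar o0 (mx3 (pB (pat 2))) (mutvar o2 B0 one3)).

Lemma seedW_fits_values : fits 8 seedW /\ forall i, value_at one3 (sx seedW i) (valuesW i).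
Proof.
have fits2 := @fits_mutate 0 o2 _ isT seed0_positive fits_seed0.
have pos2 := mutate_positive o2 seed0_positive.
have fits4 := @fits_mutate 2 o0 _ isT pos2 fits2.
have pos4 := mutate_positive o0 pos2.
split; first exact: @fits_mutate 4 o1 _ isT pos4 fits4.
have val2 := mutate_value (k := o2) seed0_value isT.
have val4 := mutate_value (k := o0) val2 isT.
have [sB2 _ _ _] := fits2; have [sB4 _ _ _] := fits4.
rewrite sB2 in val4.
have val8 := mutate_value (k := o1) val4.
by rewrite sB4 in val8; apply: val8.
Qed.

Lemma degree_minus1_infinite : ~ finitely_many seed0 (-1).
Proof.
have [fits8 val8] := seedW_fits_values.
apply: (chain_infinite (s := seedW) (p := 8) (q := 12) (i := o2) (j := o0) (m := o1)
                       (K := 5) (r0 := 2) (r1 := 3)) => //.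
- exact: mutseq_positive seed0_positive.
- by move=> x; rewrite /exchange_num !big_ord3 !mxE /= !expr0 !expr1 !mul1r !mulr1.
- by move=> x; rewrite /exchange_num !big_ord3 !mxE /= !expr0 !expr1 !mul1r !mulr1.
- exact: seedW_reachable.
all: by have := val8 _; rewrite /valuesW /mutvar /exchange_num !big_ord3 !mxE.
Qed.

Lemma fits_cv_deg n s (i : 'I_3) : reachable seed0 s -> fits n s ->
  cv_deg seed0 (nth 0 (pg (pat n)) i) (sx s i).
Proof. by move=> s_reach [_ sgE _ _]; exists s, i. Qed.

Lemma degree2_unique v : cv_deg seed0 2 v <-> v = X3.
Proof.
split=> [[s [i [s_reach [<- sg2]]]]|->].
  by case: (reachable_degree i s_reach) => _ /(_ sg2).
exact: fits_cv_deg o2 seed0_reachable fits_seed0.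
Qed.

Lemma degree_minus2_unique v : cv_deg seed0 (-2) v <-> v = W.
Proof.
split=> [[s [i [s_reach [<- sg2]]]]|->].
  by case: (reachable_degree i s_reach) => _ _ /(_ sg2).
have [fits8 _] := seedW_fits_values; have [_ _ _ ->] := fits8.
exact: fits_cv_deg o1 seedW_reachable fits8.
Qed.

Lemma degree_occursE d : degree_occurs seed0 d <-> d \in [:: 1; -1; 2; -2].
Proof.
split=> [[v [s [i [s_reach [_ <-]]]]]|]; first by have [] := reachable_degree i s_reach.
have [fits8 _] := seedW_fits_values.
rewrite !inE => /or4P [] /eqP ->.
- by eexists; apply: fits_cv_deg o0 seed0_reachable fits_seed0.
- by eexists; apply: fits_cv_deg o0 seedW_reachable fits8.
- by exists X3; apply/degree2_unique.
- by exists W; apply/degree_minus2_unique.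
Qed.

Definition cv_enum (d : int) (n : nat) : option KF :=
  if @unpickle (seq 'I_3 * 'I_3)%type n is Some (ks, i) then
    if sg (mutseq ks seed0) i == d then Some (sx (mutseq ks seed0) i) else None
  else None.

Lemma cv_enumP d v : cv_deg seed0 d v <-> exists n, cv_enum d n = Some v.
Proof.
split=> [[s [i [[ks ->] [<- <-]]]]|[n]].
  by exists (pickle (ks, i)); rewrite /cv_enum pickleK eqxx.
rewrite /cv_enum; case: unpickle => [[ks i]|] //.
by case: eqP => // sg_d [<-]; exists (mutseq ks seed0), i; split; first exists ks.
Qed.

Lemma bij_infinite_degrees d d' : ~ finitely_many seed0 d -> ~ finitely_many seed0 d' ->
  exists f : {v | cv_deg seed0 d v} -> {v | cv_deg seed0 d' v}, bijective f.
Proof.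
move=> inf_d inf_d'; have [g1 e1K g1K] := enum_at_bij 0 (cv_enumP d) inf_d.
exists (enum_at 0 (cv_enumP d') inf_d' \o g1); apply: bij_comp; first exact: enum_at_bij.
by exists (enum_at 0 (cv_enumP d) inf_d).
Qed.

Lemma B0_g0 : B0 *m \matrix_(i < 3, j < 1) g0 i == 0.
Proof.
apply/eqP/matrixP => i j; rewrite !mxE big_ord3 !mxE.
by move: i; apply: ord3P.
Qed.

Lemma balanced_seed0 : balanced seed0.
Proof.
move=> d; case: (boolP (d \in [:: 1; -1; 2; -2])) => [|d_out].
  rewrite !inE => /or4P [] /eqP ->.
  - exact: bij_infinite_degrees degree1_infinite degree_minus1_infinite.
  - exact: bij_infinite_degrees degree_minus1_infinite degree1_infinite.
  - exact: bij_sig_singleton degree2_unique degree_minus2_unique.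
  - exact: bij_sig_singleton degree_minus2_unique degree2_unique.
apply: bij_sig_empty => [[v dv]|[v dv]]; case/negP: d_out.
  by apply/degree_occursE; exists v.
have /degree_occursE : degree_occurs seed0 (- d) by exists v.
by rewrite !inE => /or4P [] /eqP dE; rewrite -(opprK d) dE.
Qed.

Theorem mainTheorem7 :
  (B0 *m \matrix_(i < 3, j < 1) g0 i == 0) /\
  mixed_type seed0 /\
  (forall d : int, degree_occurs seed0 d <-> d \in [:: 1; -1; 2; -2]) /\
  (exists! v, cv_deg seed0 2 v) /\
  (exists! v, cv_deg seed0 (-2) v) /\
  ~ finitely_many seed0 1 /\
  ~ finitely_many seed0 (-1) /\
  balanced seed0.
Proof.
have unique_of (d : int) (a : KF) :
    (forall v, cv_deg seed0 d v <-> v = a) -> exists! v, cv_deg seed0 d v.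
  by move=> da; exists a; split=> [|v /da]; [apply/da|].
split; first exact: B0_g0.
split.
  split; [exists 2 | exists 1]; split; try exact: degree1_infinite.
  - by apply/degree_occursE.
  - by exists [:: X3] => v /degree2_unique ->; rewrite mem_seq1.
  - by apply/degree_occursE.
split; first exact: degree_occursE.
split; first exact: unique_of degree2_unique.
split; first exact: unique_of degree_minus2_unique.
split; first exact: degree1_infinite.
split; first exact: degree_minus1_infinite.
exact: balanced_seed0.
Qed.
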